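(* Let $\mathbf{J}\in\mathbb{R}^{n\times n}$ be a real symmetric matrix with zero diagonal, and let $\alpha,\beta>0$ be such that $\lambda_{\min}(\mathbf{J}+\alpha\mathbf{I})>0$. Let $\{\boldsymbol{x}^{(k)}\}_{k\ge0}$ be the DOCH iterates starting from an arbitrary $\boldsymbol{x}^{(0)}\in\mathbb{R}^n$. Then every limit point $\boldsymbol{x}^*$ of $\{\boldsymbol{x}^{(k)}\}$ is a critical point of $\mathcal{H}$, i.e. $\nabla\mathcal{H}(\boldsymbol{x}^* )=\mathbf{0}$.
   Context: Let $f(\boldsymbol{x})=\frac{\beta}{4}\sum_i x_i^4$, $g(\boldsymbol{x})=\frac12\boldsymbol{x}^\top(\mathbf{J}+\alpha\mathbf{I})\boldsymbol{x}$ and $\mathcal{H}=f-g$ (equivalently $\mathcal{H}(\boldsymbol{x})=\frac{\beta}{4}\sum_i x_i^4-\frac{\alpha}{2}\sum_i x_i^2-\frac12\boldsymbol{x}^\top\mathbf{J}\boldsymbol{x}$). The DOCH iterates are defined by $\boldsymbol{x}^{(k+1)}$ being the minimizer of $F_k(\boldsymbol{x})=f(\boldsymbol{x})-g(\boldsymbol{x}^{(k)})-\nabla g(\boldsymbol{x}^{(k)})^\top(\boldsymbol{x}-\boldsymbol{x}^{(k)})$; explicitly, $\boldsymbol{x}^{(k+1)}=\varphi(\beta^{-1}(\mathbf{J}+\alpha\mathbf{I})\boldsymbol{x}^{(k)})$ with $\varphi$ the componentwise real cube root. *)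

From HB Require Import structures.
From mathcomp Require Import all_boot all_order all_algebra.
From mathcomp Require Import all_classical all_reals all_analysis.
Set Implicit Arguments. Unset Strict Implicit. Unset Printing Implicit Defensive.
Import Order.TTheory GRing.Theory Num.Theory.
Import numFieldNormedType.Exports.
Local Open Scope ring_scope.

Definition cbrt (R : realType) (r : R) : R := Num.sg r * powR `|r| (3%:R)^-1.

Definition Hfun (R : realType) (n : nat) (J : 'M[R]_n) (alpha beta : R)
  (x : 'cV[R]_n) : R :=
  beta / 4%:R * \sum_(i < n) x i 0 ^+ 4
  - 2%:R^-1 * (x^T *m (J + alpha%:M) *m x) 0 0.

Fixpoint doch (R : realType) (n : nat) (J : 'M[R]_n) (alpha beta : R)
  (x0 : 'cV[R]_n) (k : nat) : 'cV[R]_n :=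
  match k with
  | 0 => x0
  | k'.+1 => map_mx (@cbrt R) (beta^-1 *: ((J + alpha%:M) *m doch J alpha beta x0 k'))
  end.

From HB Require Import structures.
From mathcomp Require Import all_boot all_order all_algebra.
From mathcomp Require Import all_classical all_reals all_analysis.
From mathcomp Require Import ring lra.

Set Implicit Arguments.
Unset Strict Implicit.
Unset Printing Implicit Defensive.
Import Order.TTheory GRing.Theory Num.Theory.
Import numFieldNormedType.Exports.
Local Open Scope classical_set_scope.
Local Open Scope ring_scope.

(* A DOCH step is a majorize-minimize step for H = f - g: x^(k+1) minimizes the
   convex majorant F_k of H, and since g is quadratic with Hessian
   A = J + alpha I, H drops by at least (1/2) (x^(k+1) - x^(k))^T A (x^(k+1) - x^(k)),
   hence by (m/2) |x^(k+1) - x^(k)|^2, where m > 0 is the least eigenvalue of A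
   (the minimum of its Rayleigh quotient on the compact unit sphere). The quartic
   term makes H bounded below, so H(x^(k)) converges and consecutive iterates
   merge. The step equation beta (x^(k+1))^3 = A x^(k) turns the gradient
   beta x^3 - A x at x^(k+1) into A (x^(k) - x^(k+1)), which tends to 0; by
   continuity the gradient vanishes at every cluster point. *)

Section RealFacts.
Context {R : realType}.

Lemma cbrt_expr3 (r : R) : cbrt r ^+ 3 = r.
Proof.
rewrite /cbrt exprMn.
have -> : powR `|r| (3%:R)^-1 ^+ 3 = `|r|.
  by rewrite -powR_mulrn ?powR_ge0 // -powRrM mulVf ?pnatr_eq0 // powRr1.
have [r_lt0|r_gt0|->] := ltrgtP r 0.
- rewrite ltr0_sg // ltr0_norm //; ring.
- rewrite gtr0_sg // gtr0_norm //; ring.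
- by rewrite sgr0 normr0 mulr0.
Qed.

Lemma quadratic_ge0_linear_coef_eq0 (a b : R) :
  (forall t, 0 <= a * t + b * t ^+ 2) -> a = 0.
Proof.
move=> ge0; set k := `|b| + 1.
have k_gt0 : 0 < k by rewrite ltr_wpDl.
have := ge0 (- a / k).
have -> : a * (- a / k) + b * (- a / k) ^+ 2 = a ^+ 2 * (b - k) / k ^+ 2.
  by field; rewrite gt_eqF.
rewrite pmulr_lge0 ?invr_gt0 ?exprn_gt0 // => ge0'.
have b_lt_k : b < k by rewrite /k ltr_pwDr // ler_norm.
apply/eqP; rewrite -sqrf_eq0 eq_le sqr_ge0 andbT.
nra.
Qed.

Lemma quartic_tangent_le (a c b : R) : 0 <= b ->
  (a - c) * (b * c ^+ 3) <= b / 4%:R * (a ^+ 4 - c ^+ 4).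
Proof.
move=> b_ge0; rewrite -subr_ge0.
have -> : b / 4%:R * (a ^+ 4 - c ^+ 4) - (a - c) * (b * c ^+ 3)
    = b / 4%:R * ((a - c) ^+ 2 * ((a + c) ^+ 2 + 2%:R * c ^+ 2)) by field.
by apply: mulr_ge0; [exact: divr_ge0|apply: mulr_ge0; [exact: sqr_ge0|nra]].
Qed.

Lemma quartic_minus_quadratic_ge (M t b : R) : 0 < b ->
  - (M ^+ 2 / (4%:R * b)) <= b / 4%:R * t ^+ 4 - 2%:R^-1 * (M * t ^+ 2).
Proof.
move=> b_gt0; rewrite -subr_ge0.
have -> : b / 4%:R * t ^+ 4 - 2%:R^-1 * (M * t ^+ 2) - - (M ^+ 2 / (4%:R * b))
    = (b * t ^+ 2 - M) ^+ 2 / (4%:R * b) by field; rewrite gt_eqF.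
by rewrite divr_ge0 ?sqr_ge0 // mulr_ge0 // ltW.
Qed.

Lemma cvg0_sqr_le (u v : nat -> R) :
  (forall k, u k ^+ 2 <= v k) -> v @ \oo --> 0 -> u @ \oo --> 0.
Proof.
move=> uv v0; apply: norm_cvg0.
have sqrt_v0 : Num.sqrt (v k) @[k --> \oo] --> 0.
  by have := continuous_cvg _ (@sqrt_continuous R 0) v0; rewrite sqrtr0; exact.
apply: (@squeeze_cvgr _ _ _ _ (fun=> 0) (fun k => Num.sqrt (v k)));
  [|exact: cvg_cst|exact: sqrt_v0].
near=> k; rewrite normr_ge0 /= -sqrtr_sqr ler_sqrt ?uv //.
exact: le_trans (sqr_ge0 _) (uv k).
Unshelve. all: by end_near.
Qed.

Lemma cluster_continuous_cvg (T U : topologicalType) (F : set_system T)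
    (f : T -> U) (p : T) (l : U) :
  hausdorff_space U -> continuous f -> f @ F --> l -> cluster F p -> f p = l.
Proof.
move=> hU fc fFl Fp; apply/esym/hU; apply: (cvg_cluster fFl) => A B FA Bfp.
have [q [Aq Bq]] := Fp _ _ FA (fc p _ Bfp).
by exists (f q).
Qed.

End RealFacts.

(* Forms act on row vectors, as [eigenvalue] and [EVT_min_rV] do; the column
   vectors of [Hfun] and [doch] enter transposed. *)
Section QuadraticForm.
Context {R : realType} {n : nat}.
Implicit Types (A B : 'M[R]_n) (u v w : 'rV[R]_n).

Definition sqnorm u : R := \sum_i u 0 i ^+ 2.

Lemma sqnorm_ge0 u : 0 <= sqnorm u.
Proof. by apply: sumr_ge0 => i _; exact: sqr_ge0. Qed.

Lemma sqnorm_eq0 u : sqnorm u = 0 -> u = 0.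
Proof.
move=> /eqP; rewrite psumr_eq0 => [/allP u0|i _]; last exact: sqr_ge0.
apply/rowP => i; rewrite mxE; apply/eqP; rewrite -sqrf_eq0.
exact: (implyP (u0 i (mem_index_enum i))).
Qed.

Lemma sqnormZ a u : sqnorm (a *: u) = a ^+ 2 * sqnorm u.
Proof. by rewrite /sqnorm mulr_sumr; apply: eq_bigr => i _; rewrite mxE exprMn. Qed.

Lemma sqr_le_sqnorm u i : u 0 i ^+ 2 <= sqnorm u.
Proof. by rewrite /sqnorm (bigD1 i) //= lerDl; apply: sumr_ge0 => j _; exact: sqr_ge0. Qed.

Lemma sqnormE u : sqnorm u = (u *m u^T) 0 0.
Proof. by rewrite mxE; apply: eq_bigr => i _; rewrite !mxE expr2. Qed.

Lemma continuous_sqnorm : continuous sqnorm.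
Proof.
apply: continuous_big => [|i _ u]; first exact: add_continuous.
apply: (@continuous_comp _ _ _ (fun u : 'rV[R]_n => u 0 i) (fun r : R => r ^+ 2)).
  exact: coord_continuous.
exact: exprn_continuous.
Qed.

Lemma formE A u v : form idfun A u v = (u *m A *m v^T) 0 0.
Proof. by rewrite /form map_mx_id. Qed.

Lemma form_sym A u v : A^T = A -> form idfun A u v = form idfun A v u.
Proof.
move=> A_sym; have entry_tr (M : 'M[R]_1) : M 0 0 = M^T 0 0 by rewrite mxE.
by rewrite !formE [LHS]entry_tr !trmx_mul trmxK A_sym mulmxA.
Qed.

Lemma formBmx A B u v : form idfun (A - B) u v = form idfun A u v - form idfun B u v.
Proof. by rewrite !formE mulmxBr mulmxBl !mxE. Qed.

Lemma form_scalar a u : form idfun a%:M u u = a * sqnorm u.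
Proof. by rewrite formE mul_mx_scalar -scalemxAl mxE sqnormE. Qed.

Lemma form_mulmx A u : form idfun A u (u *m A) = sqnorm (u *m A).
Proof. by rewrite formE sqnormE. Qed.

Lemma form_trmx A (y z : 'cV[R]_n) : form idfun A y^T z^T = \sum_k y k 0 * (A *m z) k 0.
Proof. by rewrite formE trmxK -mulmxA mxE; apply: eq_bigr => k _; rewrite mxE. Qed.

Lemma continuous_form A : continuous (fun u => form idfun A u u).
Proof.
under eq_fun do rewrite formE mxE.
apply: continuous_big => [|j _ u]; first exact: add_continuous.
under eq_fun do rewrite !mxE.
apply: continuousM; last exact: coord_continuous.
apply: continuous_big => [|i _ w]; first exact: add_continuous.
by apply: continuousM; [exact: coord_continuous|exact: cst_continuous].
Qed.

Lemma compact_unit_sphere : compact [set u : 'rV[R]_n | sqnorm u = 1].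
Proof.
apply: bounded_closed_compact; last first.
  apply: (@preimage_closed _ _ sqnorm [set x | x = 1]) => [u _|].
    exact: continuous_sqnorm.
  exact: closed_eq.
exists 1; split => // M M_gt1 u /= u1; rewrite [leLHS]/Num.norm /= mx_normrE.
apply: bigmax_le => [|[i j] _ /=]; first by rewrite ltW // (lt_trans ltr01).
rewrite (ord1 i); apply: ltW; apply: le_lt_trans M_gt1.
have := sqr_le_sqnorm u j; rewrite u1 -real_normK ?num_real // => h.
have := normr_ge0 (u 0 j); nra.
Qed.

Lemma sphere_form_ge0 A :
  (forall v, sqnorm v = 1 -> 0 <= form idfun A v v) -> forall u, 0 <= form idfun A u u.
Proof.
move=> sphere_ge0 u; have [/sqnorm_eq0 ->|u_neq0] := eqVneq (sqnorm u) 0.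
  by rewrite form0l.
have u_gt0 : 0 < sqnorm u by rewrite lt_def u_neq0 sqnorm_ge0.
have s_gt0 : 0 < Num.sqrt (sqnorm u) by rewrite sqrtr_gt0.
have := sphere_ge0 ((Num.sqrt (sqnorm u))^-1 *: u).
rewrite sqnormZ exprVn sqr_sqrtr ?sqnorm_ge0 // mulVf // formZl formZr => /(_ erefl).
by rewrite /= !pmulr_rge0 // invr_gt0.
Qed.

Lemma form_ge_sphere A a :
  (forall v, sqnorm v = 1 -> a <= form idfun A v v) ->
  forall u, a * sqnorm u <= form idfun A u u.
Proof.
move=> sphere_ge u; rewrite -subr_ge0 -form_scalar -formBmx.
by apply: sphere_form_ge0 => v v1; rewrite formBmx form_scalar v1 mulr1 subr_ge0 sphere_ge.
Qed.

Lemma form_le_sphere A a :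
  (forall v, sqnorm v = 1 -> form idfun A v v <= a) ->
  forall u, form idfun A u u <= a * sqnorm u.
Proof.
move=> sphere_le u; rewrite -subr_ge0 -form_scalar -formBmx.
by apply: sphere_form_ge0 => v v1; rewrite formBmx form_scalar v1 mulr1 subr_ge0 sphere_le.
Qed.

Lemma form_le_sqnorm A : exists M, forall u, form idfun A u u <= M * sqnorm u.
Proof.
suff [M sphere_le] : exists M, forall v, sqnorm v = 1 -> form idfun A v v <= M.
  by exists M; exact: form_le_sphere.
have [[v v1]|S0] := pselect ([set u : 'rV[R]_n | sqnorm u = 1] !=set0); last first.
  by exists 0 => v v1; case: S0; exists v.
have [c _ c_max] := EVT_max_rV (ex_intro _ v v1) compact_unit_sphere
  (continuous_subspaceT (continuous_form (A := A))).
by exists (form idfun A c c) => w w1; apply: c_max; rewrite inE.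
Qed.

Lemma psd_form_kernel A c : A^T = A -> (forall u, 0 <= form idfun A u u) ->
  form idfun A c c = 0 -> c *m A = 0.
Proof.
move=> A_sym A_psd cc0; apply: sqnorm_eq0.
suff /eqP : 2%:R * sqnorm (c *m A) = 0 by rewrite mulf_eq0 pnatr_eq0 => /eqP.
apply: (@quadratic_ge0_linear_coef_eq0 _ _ (form idfun A (c *m A) (c *m A))) => t.
have := A_psd (c + t *: (c *m A)).
rewrite formDl !formDr !formZl !formZr cc0 (form_sym (c *m A) c A_sym) form_mulmx /=.
lra.
Qed.

(* The minimum m of the form on the unit sphere is an eigenvalue: the form of
   A - m I is nonnegative and vanishes at a minimizer. *)
Lemma form_coercive A : A^T = A -> (forall a, eigenvalue A a -> 0 < a) ->
  exists2 m, 0 < m & forall u, m * sqnorm u <= form idfun A u u.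
Proof.
move=> A_sym A_pos.
suff [m m_gt0 sphere_ge] : exists2 m, 0 < m &
    forall v, sqnorm v = 1 -> m <= form idfun A v v.
  by exists m => //; exact: form_ge_sphere.
have [[v v1]|S0] := pselect ([set u : 'rV[R]_n | sqnorm u = 1] !=set0); last first.
  by exists 1 => // w w1; case: S0; exists w.
have [c c1 c_min] := EVT_min_rV (ex_intro _ v v1) compact_unit_sphere
  (continuous_subspaceT (continuous_form (A := A))).
rewrite inE in c1.
set m := form idfun A c c.
have sphere_ge w : sqnorm w = 1 -> m <= form idfun A w w by move=> w1; apply: c_min; rewrite inE.
exists m => //; apply: A_pos; apply/eigenvalueP; exists c; last first.
  apply/eqP => c0; move: c1; rewrite c0 /sqnorm big1 => [|i _]; last by rewrite mxE expr0n.
  by move/eqP; rewrite eq_sym oner_eq0.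
have B_sym : (A - m%:M)^T = A - m%:M by rewrite linearB /= tr_scalar_mx A_sym.
have B_psd u : 0 <= form idfun (A - m%:M) u u.
  by rewrite formBmx form_scalar subr_ge0 form_ge_sphere.
have := psd_form_kernel (c := c) B_sym B_psd; rewrite formBmx form_scalar c1 mulr1 subrr.
by move=> /(_ erefl); rewrite mulmxBr mul_mx_scalar => /eqP; rewrite subr_eq0 => /eqP.
Qed.

End QuadraticForm.

Section Hfun.
Context {R : realType} {n : nat} (J : 'M[R]_n) (alpha beta : R).
Local Notation A := (J + alpha%:M).
Local Notation H := (Hfun J alpha beta).
Hypotheses (A_sym : A^T = A) (beta_gt0 : 0 < beta).

Definition Hfun_partial (i : 'I_n) (z : 'cV[R]_n) : R := beta * z i 0 ^+ 3 - (A *m z) i 0.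

Lemma continuous_Hfun_partial i : continuous (Hfun_partial i).
Proof.
have cube_cont : continuous (fun z : 'cV[R]_n => z i 0 ^+ 3).
  move=> z; apply: (@continuous_comp _ _ _ (fun z : 'cV[R]_n => z i 0) (fun r : R => r ^+ 3)).
    exact: coord_continuous.
  exact: exprn_continuous.
have mulmx_cont : continuous (fun z : 'cV[R]_n => (A *m z) i 0).
  under eq_fun do rewrite mxE.
  apply: continuous_big => [|j _ z]; first exact: add_continuous.
  by apply: continuousM; [exact: cst_continuous|exact: coord_continuous].
move=> z; apply: (@continuousB _ _ _ (fun z : 'cV[R]_n => beta * z i 0 ^+ 3)).
  by apply: (@continuousM _ _ (fun=> beta)); [exact: cst_continuous|exact: cube_cont].
exact: mulmx_cont.
Qed.

Lemma HfunE z :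
  H z = beta / 4%:R * \sum_k z k 0 ^+ 4 - 2%:R^-1 * form idfun A z^T z^T.
Proof. by rewrite /Hfun formE trmxK. Qed.

Lemma Hfun_descent (x y : 'cV[R]_n) :
  (forall j, beta * y j 0 ^+ 3 = (A *m x) j 0) ->
  2%:R^-1 * form idfun A (y - x)^T (y - x)^T <= H x - H y.
Proof.
move=> y_cube; rewrite !HfunE linearB /=.
rewrite formDl !formDr !formNl !formNr (form_sym x^T y^T A_sym).
have lin_part : form idfun A x^T x^T - form idfun A y^T x^T
    = \sum_k (x k 0 - y k 0) * (beta * y k 0 ^+ 3).
  rewrite -formNl -formDl -linearN -linearD form_trmx.
  by apply: eq_bigr => k _; rewrite y_cube !mxE.
have : \sum_k (x k 0 - y k 0) * (beta * y k 0 ^+ 3)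
    <= \sum_k beta / 4%:R * (x k 0 ^+ 4 - y k 0 ^+ 4).
  by apply: ler_sum => k _; apply: quartic_tangent_le; exact: ltW.
rewrite -mulr_sumr sumrB -lin_part.
lra.
Qed.

Lemma Hfun_has_lbound : has_lbound (range H).
Proof.
have [M form_le] := form_le_sqnorm A.
exists (\sum_(k < n) - (M ^+ 2 / (4%:R * beta))) => _ [z _ <-].
apply: (@le_trans _ _ (\sum_k (beta / 4%:R * z k 0 ^+ 4 - 2%:R^-1 * (M * z k 0 ^+ 2)))).
  by apply: ler_sum => k _; exact: quartic_minus_quadratic_ge.
have sqnorm_tr : sqnorm z^T = \sum_k z k 0 ^+ 2.
  by apply: eq_bigr => k _; rewrite mxE.
have := form_le z^T; rewrite HfunE sumrB -!mulr_sumr sqnorm_tr.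
lra.
Qed.

Lemma Hfun_shift (z : 'cV[R]_n) (i : 'I_n) (h : R) :
  H (h *: delta_mx i 0 + z) - H z =
  beta / 4%:R * ((z i 0 + h) ^+ 4 - z i 0 ^+ 4)
  - 2%:R^-1 * (2%:R * h * (A *m z) i 0 + h ^+ 2 * A i i).
Proof.
set e : 'cV[R]_n := delta_mx i 0.
have quartic_diff : \sum_k (h *: e + z) k 0 ^+ 4 - \sum_k z k 0 ^+ 4
    = (z i 0 + h) ^+ 4 - z i 0 ^+ 4.
  rewrite (bigD1 i) // [X in _ - X](bigD1 i) //= !mxE eqxx mulr1.
  rewrite (eq_bigr (fun k => z k 0 ^+ 4)) => [|k /negbTE ki]; last by rewrite !mxE ki mulr0 add0r.
  ring.
have form_e_z : form idfun A e^T z^T = (A *m z) i 0.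
  rewrite form_trmx (bigD1 i) //= big1 => [|k /negbTE ki]; last by rewrite mxE ki mul0r.
  by rewrite mxE !eqxx mul1r addr0.
rewrite !HfunE.
have -> : (h *: e + z)^T = h *: e^T + z^T by rewrite linearD linearZ.
rewrite formDl !formDr !formZl !formZr /= (form_sym z^T _ A_sym) form_e_z.
rewrite trmx_delta formee -quartic_diff.
ring.
Qed.

Lemma is_derive_Hfun (z : 'cV[R]_n) (i : 'I_n) :
  is_derive z (delta_mx i 0) H (Hfun_partial i z).
Proof.
set p := z i 0.
pose remainder h := beta / 4%:R * (6%:R * p ^+ 2 + 4%:R * p * h + h ^+ 2) - A i i / 2%:R.
have quotientE : {near 0^', (fun h => Hfun_partial i z + h * remainder h) =1
    (fun h => h^-1 *: ((H \o shift z) (h *: delta_mx i 0) - H z))}.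
  near=> h; have h_neq0 : h != 0 by near: h; exact: nbhs_dnbhs_neq.
  by rewrite /= Hfun_shift // /Hfun_partial /remainder -/p /GRing.scale /=; field.
have remainder_cvg : remainder h @[h --> (0 : R)] --> remainder 0.
  apply: cvgB; last exact: cvg_cst.
  apply: cvgM; first exact: cvg_cst.
  apply: cvgD; [apply: cvgD; [exact: cvg_cst|] | exact: cvgM cvg_id cvg_id].
  by apply: cvgM; [exact: cvg_cst|exact: cvg_id].
have quotient_cvg : Hfun_partial i z + h * remainder h @[h --> 0^'] --> Hfun_partial i z.
  apply: cvg_within_filter.
  have := cvgD (cvg_cst (Hfun_partial i z)) (cvgM cvg_id remainder_cvg).
  by rewrite mul0r addr0; exact.
have D := cvg_trans (near_eq_cvg quotientE) quotient_cvg.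
split; first by apply: (cvgP (Hfun_partial i z)); exact: D.
by apply: cvg_lim; [exact: norm_hausdorff|exact: D].
Unshelve. all: by end_near.
Qed.

Variable x0 : 'cV[R]_n.
Local Notation x_ := (doch J alpha beta x0).
Hypothesis A_pos : forall a, eigenvalue A a -> 0 < a.

Lemma doch_cube k j : beta * x_ k.+1 j 0 ^+ 3 = (A *m x_ k) j 0.
Proof.
rewrite /= [X in _ * X ^+ 3]mxE cbrt_expr3 [X in _ * X = _]mxE.
by rewrite mulrA mulfV ?gt_eqF // mul1r.
Qed.

Lemma doch_step_sqnorm_cvg0 : sqnorm (x_ k.+1 - x_ k)^T @[k --> \oo] --> 0.
Proof.
have [m m_gt0 A_coercive] := form_coercive A_sym A_pos.
have step_le k : sqnorm (x_ k.+1 - x_ k)^T <= 2%:R / m * (H (x_ k) - H (x_ k.+1)).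
  have := Hfun_descent (doch_cube k).
  have := A_coercive (x_ k.+1 - x_ k)^T.
  rewrite mulrAC ler_pdivlMr // => ? ?; lra.
have H_nonincr : nonincreasing_seq (H \o x_).
  apply/nonincreasing_seqP => k /=; rewrite -subr_ge0.
  have := le_trans (sqnorm_ge0 _) (step_le k).
  by rewrite pmulr_rge0 // divr_gt0.
have H_lbound : has_lbound (range (H \o x_)).
  have [l l_lb] := Hfun_has_lbound.
  by exists l => _ [k _ <-]; apply: l_lb; exists (x_ k).
have H_cvg := nonincreasing_cvgn H_nonincr H_lbound.
have gap_cvg0 : H (x_ k) - H (x_ k.+1) @[k --> \oo] --> 0.
  have H_cvgS : H (x_ k.+1) @[k --> \oo] --> inf (range (H \o x_)).
    by rewrite (cvg_shiftS (H \o x_)).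
  by have := cvgB H_cvg H_cvgS; rewrite subrr; apply.
apply: (@squeeze_cvgr _ _ _ _ (fun=> 0) (fun k => 2%:R / m * (H (x_ k) - H (x_ k.+1)))).
- by near=> k; rewrite sqnorm_ge0 step_le.
- exact: cvg_cst.
- by have := cvgM (cvg_cst (2%:R / m)) gap_cvg0; rewrite mulr0; apply.
Unshelve. all: by end_near.
Qed.

Lemma doch_increment_cvg0 j : x_ k.+1 j 0 - x_ k j 0 @[k --> \oo] --> 0.
Proof.
apply: cvg0_sqr_le doch_step_sqnorm_cvg0 => k.
by have := sqr_le_sqnorm (x_ k.+1 - x_ k)^T j; rewrite !mxE.
Qed.

Lemma doch_partial_cvg0 i : Hfun_partial i (x_ k) @[k --> \oo] --> 0.
Proof.
rewrite -(cvg_shiftS (fun k => Hfun_partial i (x_ k))) /=.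
have -> : (fun k => Hfun_partial i (x_ k.+1))
    = (fun k => - \sum_j A i j * (x_ k.+1 j 0 - x_ k j 0)).
  apply/funext => k; rewrite /Hfun_partial doch_cube !mxE -sumrB -sumrN.
  by apply: eq_bigr => j _; ring.
have sum_cvg0 : \sum_j A i j * (x_ k.+1 j 0 - x_ k j 0) @[k --> \oo] --> \sum_(j < n) (0 : R).
  apply: cvg_big => [|j _]; first exact: add_continuous.
  by have := cvgM (cvg_cst (A i j)) (doch_increment_cvg0 j); rewrite mulr0; apply.
by have := cvgN sum_cvg0; rewrite big1_eq oppr0; apply.
Qed.

End Hfun.

Theorem propositionS8 (R : realType) (n : nat) (J : 'M[R]_n) (alpha beta : R)
  (x0 : 'cV[R]_n) :
  J^T = J -> (forall i, J i i = 0) -> 0 < alpha -> 0 < beta ->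
  (forall a : R, eigenvalue (J + alpha%:M) a -> 0 < a) ->
  forall xstar : 'cV[R]_n,
    cluster (doch J alpha beta x0 @ \oo) xstar ->
    forall i : 'I_n,
      derivable (Hfun J alpha beta) xstar (delta_mx i 0) /\
      'D_(delta_mx i 0) (Hfun J alpha beta) xstar = 0.
Proof.
move=> J_sym _ _ beta_gt0 A_pos xstar xstar_cluster i.
have A_sym : (J + alpha%:M)^T = J + alpha%:M by rewrite linearD /= J_sym tr_scalar_mx.
have partial0 : Hfun_partial J alpha beta i xstar = 0.
  apply: (cluster_continuous_cvg _ _ _ xstar_cluster).
  - exact: norm_hausdorff.
  - exact: continuous_Hfun_partial.
  - exact: doch_partial_cvg0.
have := is_derive_Hfun beta A_sym xstar i; rewrite partial0 => derive_H.
by split; [exact: ex_derive|exact: derive_val].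
Qed.
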